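(* Let $\mu>0$ and $0<\beta<1$. Let $g:\mathbb{C}\to\mathbb{R}$ be given by $g(x)=\frac{\mu+|x|^2}{2}$ for $|x|\ge\sqrt{\mu}$ and $g(x)=\sqrt{\mu}|x|$ for $|x|\le\sqrt{\mu}$. Suppose $z_0\in\partial g(x_0)$ and $|z_0|>\sqrt{\mu}/\beta^2$. Then for all $x_1\in\mathbb{C}$ with $x_1\neq x_0$ and all $z_1\in\partial g(x_1)$, $$\mathrm{Re}\big((z_1-z_0)\overline{(x_1-x_0)}\big)>(1-\beta^2)|x_1-x_0|^2.$$
   Context: $\partial g$ is the convex subdifferential (with $\mathbb{C}$ regarded as $\mathbb{R}^2$ with inner product $\mathrm{Re}(z\bar w)$); explicitly $\partial g(x)=\{x\}$ if $|x|\ge\sqrt\mu$, $\partial g(x)=\{\sqrt{\mu}\,x/|x|\}$ if $0<|x|\le\sqrt\mu$, and $\partial g(0)=\sqrt{\mu}\,\mathbb{D}$, where $\mathbb{D}$ is the closed unit disc. (In the paper $\beta$ is the constant $\beta_N=\inf\{\|Ax\|_2/\|x\|_2:x\ne0,\mathrm{card}(x)\le N\}$ of a matrix $A$, assumed to satisfy $0<\beta_N<1$; only its value matters here.) *)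

From Stdlib Require Import Reals.
From Coquelicot Require Import Coquelicot.
Open Scope R_scope.

(* Real inner product on C viewed as R^2: <z, w> = Re (z * conj w). *)
Definition cinner (z w : C) : R := Re (Cmult z (Cconj w)).

Definition gmu (mu : R) (x : C) : R :=
  if Rle_dec (sqrt mu) (Cmod x) then (mu + (Cmod x) ^ 2) / 2
  else sqrt mu * Cmod x.

Definition subdiff (f : C -> R) (x z : C) : Prop :=
  forall y : C, f x + cinner z (Cminus y x) <= f y.

(* A subgradient z at x satisfies z = x when |x| >= sqrt mu, and |z - x| <= sqrt mu - |x|
   (in particular |z| <= sqrt mu) when |x| < sqrt mu.  Hence |z0| > sqrt mu forces z0 = x0,
   and beta^2 |x0| > sqrt mu gives |z1 - x1| < beta^2 |x1 - x0|.  Splitting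
   z1 - x0 = (z1 - x1) + (x1 - x0), Cauchy-Schwarz bounds the inner product below by
   (1 - beta^2) |x1 - x0|^2. *)
From Stdlib Require Import Reals Lra Psatz.
From Coquelicot Require Import Coquelicot.
Open Scope R_scope.

Lemma cinner_pair (a b c d : R) : cinner (a, b) (c, d) = a * c + b * d.
Proof. unfold cinner, Cmult, Cconj, Re; simpl; ring. Qed.

Lemma cinner_Cplus_l (u v w : C) : cinner (u + v)%C w = cinner u w + cinner v w.
Proof. destruct u, v, w. unfold Cplus. simpl. rewrite !cinner_pair. ring. Qed.

Lemma cinner_Cminus_r (z u v : C) : cinner z (u - v)%C = cinner z u - cinner z v.
Proof. destruct z, u, v. unfold Cminus, Cplus, Copp. simpl. rewrite !cinner_pair. ring. Qed.

Lemma cinner_0_r (z : C) : cinner z 0 = 0.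
Proof. destruct z. unfold RtoC. rewrite cinner_pair. ring. Qed.

Lemma cinner_diag (z : C) : cinner z z = Cmod z ^ 2.
Proof. destruct z. rewrite cinner_pair, Cmod2_alt. simpl. ring. Qed.

Lemma Rabs_cinner_le (z w : C) : Rabs (cinner z w) <= Cmod z * Cmod w.
Proof.
  unfold cinner. rewrite <- (Cmod_conj w), <- Cmod_mult.
  apply re_le_Cmod.
Qed.

Lemma Cmod_minus_sqr (z w : C) :
  Cmod (z - w)%C ^ 2 = Cmod z ^ 2 - 2 * cinner z w + Cmod w ^ 2.
Proof.
  destruct z, w. rewrite !Cmod2_alt, cinner_pair. unfold Cminus, Cplus, Copp. simpl. ring.
Qed.

Lemma Cmod_sub_le_Cmod_minus (z w : C) : Cmod z - Cmod w <= Cmod (z - w)%C.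
Proof.
  pose proof (Cmod_triangle (z - w)%C w) as H.
  replace (z - w + w)%C with z in H by ring. lra.
Qed.

Lemma Cmod_minus_sym (z w : C) : Cmod (z - w)%C = Cmod (w - z)%C.
Proof. rewrite <- Cmod_opp. f_equal. ring. Qed.

Lemma cinner_add_gt (u d : C) (e : R) :
  Cmod u < e * Cmod d -> (1 - e) * Cmod d ^ 2 < cinner (u + d)%C d.
Proof.
  intros Hu.
  rewrite cinner_Cplus_l, cinner_diag.
  pose proof (Rabs_cinner_le u d) as Hcs. apply Rabs_le_between in Hcs.
  assert (Hd : 0 < Cmod d).
  { destruct (Cmod_ge_0 d) as [|Hd0]; [assumption|].
    rewrite <- Hd0, Rmult_0_r in Hu. pose proof (Cmod_ge_0 u). lra. }
  assert (Cmod u * Cmod d < e * Cmod d * Cmod d) by (apply Rmult_lt_compat_r; assumption).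
  nra.
Qed.

Lemma gmu_0 (mu : R) : 0 < mu -> gmu mu 0 = 0.
Proof.
  intros Hmu. unfold gmu. rewrite Cmod_0. pose proof (sqrt_lt_R0 mu Hmu).
  destruct Rle_dec; lra.
Qed.

Lemma gmu_le (mu : R) (y : C) : 0 <= mu -> gmu mu y <= (mu + Cmod y ^ 2) / 2.
Proof.
  intros Hmu. unfold gmu. destruct Rle_dec; [lra|].
  pose proof (sqrt_sqrt mu Hmu). nra.
Qed.

Section SubdiffGmu.

Variables (mu : R) (x z : C).
Hypotheses (Hmu : 0 < mu) (Hz : subdiff (gmu mu) x z).

Lemma subdiff_gmu_outer : sqrt mu <= Cmod x -> z = x.
Proof.
  intros Hx.
  assert (Hat_z := Hz z). pose proof (gmu_le mu z (Rlt_le _ _ Hmu)).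
  unfold gmu at 1 in Hat_z. destruct Rle_dec; [|lra].
  rewrite cinner_Cminus_r, cinner_diag in Hat_z.
  assert (Hdist : Cmod (z - x)%C ^ 2 <= 0) by (rewrite Cmod_minus_sqr; lra).
  assert (Hzero : Cmod (z - x)%C = 0) by (pose proof (Cmod_ge_0 (z - x)%C); nra).
  replace z with ((z - x) + x)%C by ring.
  rewrite (Cmod_eq_0 _ Hzero). ring.
Qed.

Lemma subdiff_gmu_inner : Cmod x < sqrt mu -> Cmod (z - x)%C <= sqrt mu - Cmod x.
Proof.
  intros Hx.
  pose proof (sqrt_sqrt mu (Rlt_le _ _ Hmu)). pose proof (sqrt_pos mu).
  pose proof (Cmod_ge_0 x). pose proof (Cmod_ge_0 z).
  assert (Hgx : gmu mu x = sqrt mu * Cmod x) by (unfold gmu; destruct Rle_dec; lra).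
  assert (Hinner : sqrt mu * Cmod x <= cinner z x).
  { assert (Hat_0 := Hz 0).
    rewrite Hgx, (gmu_0 mu Hmu), cinner_Cminus_r, cinner_0_r in Hat_0. lra. }
  (* Testing at y = z gives (|z| - sqrt mu) (|z| + sqrt mu - 2 |x|) <= 0. *)
  assert (Hzmod : Cmod z <= sqrt mu).
  { assert (Hat_z := Hz z). pose proof (gmu_le mu z (Rlt_le _ _ Hmu)).
    rewrite Hgx, cinner_Cminus_r, cinner_diag in Hat_z.
    pose proof (Rabs_cinner_le z x) as Hcs. apply Rabs_le_between in Hcs.
    destruct (Rle_lt_dec (Cmod z) (sqrt mu)); [assumption | nra]. }
  assert (Hsqr : Cmod (z - x)%C ^ 2 <= (sqrt mu - Cmod x) ^ 2)
    by (rewrite Cmod_minus_sqr; nra).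
  pose proof (Cmod_ge_0 (z - x)%C). nra.
Qed.

Lemma subdiff_gmu_large : sqrt mu < Cmod z -> z = x.
Proof.
  intros Hzl. apply subdiff_gmu_outer.
  destruct (Rle_lt_dec (sqrt mu) (Cmod x)) as [|Hx]; [assumption|].
  pose proof (subdiff_gmu_inner Hx). pose proof (Cmod_sub_le_Cmod_minus z x). lra.
Qed.

End SubdiffGmu.

Theorem lemma4p3 (mu beta : R) (x0 z0 : C) :
  0 < mu -> 0 < beta < 1 ->
  subdiff (gmu mu) x0 z0 ->
  Cmod z0 > sqrt mu / beta ^ 2 ->
  forall x1 z1 : C, x1 <> x0 -> subdiff (gmu mu) x1 z1 ->
  cinner (Cminus z1 z0) (Cminus x1 x0) > (1 - beta ^ 2) * (Cmod (Cminus x1 x0)) ^ 2.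
Proof.
  intros Hmu Hbeta Hz0 Hz0_large x1 z1 Hne Hz1.
  assert (Hb2 : 0 < beta ^ 2 < 1) by (split; nra).
  assert (Hsqrt : sqrt mu < beta ^ 2 * Cmod z0).
  { apply (Rmult_lt_compat_l (beta ^ 2)) in Hz0_large; [|lra].
    replace (beta ^ 2 * (sqrt mu / beta ^ 2)) with (sqrt mu) in Hz0_large by (field; lra).
    exact Hz0_large. }
  assert (Hx0 : z0 = x0).
  { apply (subdiff_gmu_large mu x0 z0 Hmu Hz0). pose proof (Cmod_ge_0 z0). nra. }
  subst z0.
  replace (z1 - x0)%C with ((z1 - x1) + (x1 - x0))%C by ring.
  apply cinner_add_gt.
  destruct (Rle_lt_dec (sqrt mu) (Cmod x1)) as [Hx1 | Hx1].
  - rewrite (subdiff_gmu_outer mu x1 z1 Hmu Hz1 Hx1).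
    replace (x1 - x1)%C with (RtoC 0) by ring. rewrite Cmod_0.
    assert (0 < Cmod (x1 - x0)%C).
    { apply Cmod_gt_0. intros Hd. apply Hne. replace x1 with ((x1 - x0) + x0)%C by ring.
      rewrite Hd. ring. }
    nra.
  - pose proof (subdiff_gmu_inner mu x1 z1 Hmu Hz1 Hx1).
    pose proof (Cmod_sub_le_Cmod_minus x0 x1) as Hrev. rewrite Cmod_minus_sym in Hrev.
    pose proof (Cmod_ge_0 x1). nra.
Qed.
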